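(* Let $(X_n,\|\cdot\|_n)_{n\ge1}$ be a sequence of Banach spaces, let $Z=(\sum_{n=1}^\infty\oplus X_n)_1$ and let $X$ be the Banach space defined in the context (both identified with spaces of sequences $(x_n)$, $x_n\in X_n$). Then $(X_n)_{n\ge1}$ is a monotone Schauder decomposition of each of the spaces $X$ and $Z$, and it is moreover a $1$-unconditional decomposition of $X$ and of $Z$. In particular, for every $x=(x_1,x_2,\dots)\in c_{00}((X_n))$, every $(\varepsilon_i)\in\{-1,1\}^{\mathbb{N}}$ and every $m\in\mathbb{N}$, $$\|(\varepsilon_1x_1,\dots,\varepsilon_mx_m)\|=\|(x_1,\dots,x_m)\|\le\|(x_1,\dots,x_{m+1})\|$$ and the same holds with $\|\cdot\|$ replaced by the norm $\|\cdot\|_Z$ of $Z$.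
   Context: $c_{00}((X_n))$ is the vector space of sequences $(x_1,x_2,\dots)$ with $x_k\in X_k$ and only finitely many $x_k\ne0$; $(x_1,\dots,x_n)$ denotes $(x_1,\dots,x_n,0,0,\dots)$. On $c_{00}((X_n))$ define inductively $\|(x_1)\|=\|x_1\|_1$ (the norm of $X_1$) and, for $n\ge2$, $$\|(x_1,\dots,x_n)\|=\Big(1-\tfrac{1}{n+1}\Big)\big(\|x_n\|_n+\|(x_1,\dots,x_{n-1})\|\big)+\tfrac{1}{n+1}\max\Big\{\tfrac{\|x_n\|_n}{n},\ \|(x_1,\dots,x_{n-1})\|\Big\}.$$ $X$ is the completion of $(c_{00}((X_n)),\|\cdot\|)$; since this norm satisfies $\frac12\sum\|x_n\|_n\le\|(x_n)\|\le\sum\|x_n\|_n$, $X$ is identified with the space of sequences $(x_n)$, $x_n\in X_n$, $\sum_n\|x_n\|_n<\infty$. $Z=(\sum\oplus X_n)_1$ has norm $\|(x_n)\|_Z=\sum_n\|x_n\|_n$. A sequence of closed subspaces $(X_n)$ is a Schauder decomposition of a Banach space $W$ if every $w\in W$ has a unique norm-convergent expansion $w=\sum_n w_n$ with $w_n\in X_n$; it is monotone if the partial sum projections $P_m w=\sum_{n\le m}w_n$ satisfy $\|P_m w\|\le\|P_{m+1}w\|$ (hence $\|P_m\|\le1$); it is $1$-unconditional if $\|\sum_n\varepsilon_nw_n\|=\|\sum_n w_n\|$ for all signs $\varepsilon_n\in\{-1,1\}$. *)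

From HB Require Import structures.
From mathcomp Require Import all_boot all_order all_algebra.
From mathcomp Require Import all_classical all_reals all_analysis.
Set Implicit Arguments. Unset Strict Implicit. Unset Printing Implicit Defensive.
Import Order.TTheory GRing.Theory Num.Theory.
Import numFieldNormedType.Exports.
Local Open Scope classical_set_scope.
Local Open Scope ring_scope.

(* INDEXING CONVENTION: the paper's spaces X_1, X_2, ... are the family
   [Xs 0, Xs 1, ...] (0-based: Xs k plays the role of X_{k+1}). *)

Section Defs.
Variables (R : realType) (Xs : nat -> normedModType R).

Definition seqs := forall k : nat, Xs k.

(* Nrec x k = ||(x_1, ..., x_{k+1})|| of the paper (inductive definition),
   with paper index n = k.+1 *)
Fixpoint Nrec (x : seqs) (k : nat) : R :=
  match k with
  | 0 => `|x 0%N|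
  | k'.+1 =>
      let n : R := k'.+2%:R in
      (1 - 1 / (n + 1)) * (`|x k'.+1| + Nrec x k')
      + 1 / (n + 1) * Num.max (`|x k'.+1| / n) (Nrec x k')
  end.

Definition Zrec (x : seqs) (k : nat) : R := \sum_(i < k.+1) `|x i|.

(* the sequences in X (equivalently Z): sum_n ||x_n|| < oo *)
Definition summable (x : seqs) : Prop := cvg (Zrec x @ \oo).

(* Norms on the completions, identified with sequence spaces: the norm of
   w is the limit of the norms of its truncations (continuous extension). *)
Definition Xnorm (x : seqs) : R := limn (Nrec x).
Definition Znorm (x : seqs) : R := limn (Zrec x).

(* partial sum projection P_m (paper's P_{m+1}): keep x_0..x_m *)
Definition trunc (m : nat) (x : seqs) : seqs :=
  fun k => if (k <= m)%N then x k else 0.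

Definition sub_seq (x y : seqs) : seqs := fun k => x k - y k.
Definition sign_seq (e : nat -> R) (x : seqs) : seqs := fun k => e k *: x k.

(* Elements of X_n are
   embedded as sequences supported at n; the partial sums of sum_n e_n(v_n)
   are [trunc m v]. *)
Definition schauder_decomposition (nrm : seqs -> R) : Prop :=
  forall w : seqs, summable w ->
    ((fun m => nrm (sub_seq w (trunc m w))) @ \oo --> 0) /\
    (forall v : seqs,
        (fun m => nrm (sub_seq w (trunc m v))) @ \oo --> 0 -> v = w).

Definition monotone_decomposition (nrm : seqs -> R) : Prop :=
  forall w : seqs, summable w ->
    forall m, nrm (trunc m w) <= nrm (trunc m.+1 w).

Definition unconditional1_decomposition (nrm : seqs -> R) : Prop :=
  forall (w : seqs) (e : nat -> R), summable w ->
    (forall k, e k = 1 \/ e k = -1) ->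
    summable (sign_seq e w) /\ nrm (sign_seq e w) = nrm w.

End Defs.

(** Both the partial norms ||(x_1,...,x_n)|| of [X] and the partial sums of
  the l_1 norm of [Z] depend only on the norms of the coordinates, are
  nondecreasing in n, ignore an appended zero coordinate, and lie between
  ||x_n||/2 and sum_i ||x_i|| (for [X] because the weight 1/(n+1) is at most
  1/2).  These five properties alone make the limit norm admit the coordinate
  spaces as a monotone, 1-unconditional Schauder decomposition: signs are
  invisible, the norm of a truncation is the partial norm, the norm of a tail
  is dominated by its l_1 norm, which tends to 0, and a coordinate is bounded
  by twice the norm, which makes the expansion unique. *)

From HB Require Import structures.
From mathcomp Require Import all_boot all_order all_algebra.
From mathcomp Require Import all_classical all_reals all_analysis.
From mathcomp Require Import lra.
Set Implicit Arguments. Unset Strict Implicit. Unset Printing Implicit Defensive.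
Import Order.TTheory GRing.Theory Num.Theory.
Import numFieldNormedType.Exports.
Local Open Scope classical_set_scope.
Local Open Scope ring_scope.

Definition nstep (R : realFieldType) (n a b : R) : R :=
  (1 - 1 / (n + 1)) * (a + b) + 1 / (n + 1) * Num.max (a / n) b.

Lemma nstep_weight (R : realFieldType) (n : R) :
  1 <= n -> 0 < 1 / (n + 1) <= 1 / 2.
Proof.
move=> n_ge1; rewrite divr_gt0 ?ltr_wpDl ?(le_trans ler01) //=.
rewrite ler_pM2l // lef_pV2 ?posrE; lra.
Qed.

Lemma nstep_ge_r (R : realFieldType) (n a b : R) :
  1 <= n -> 0 <= a -> b <= nstep n a b.
Proof.
move=> /nstep_weight/andP[] + + a_ge0.
have : b <= Num.max (a / n) b by rewrite le_max lexx orbT.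
rewrite /nstep; move: (1 / (n + 1)) => t *; nra.
Qed.

Lemma nstep_le_add (R : realFieldType) (n a b : R) :
  1 <= n -> 0 <= a -> 0 <= b -> nstep n a b <= a + b.
Proof.
move=> n_ge1 a_ge0 b_ge0; have : Num.max (a / n) b <= a + b.
  by rewrite ge_max lerDr a_ge0 andbT ler_pdivrMr ?(lt_le_trans ltr01) //; nra.
have /andP[] := nstep_weight n_ge1.
rewrite /nstep; move: (1 / (n + 1)) => t *; nra.
Qed.

Lemma nstep_ge_l (R : realFieldType) (n a b : R) :
  1 <= n -> 0 <= a -> 0 <= b -> a <= 2 * nstep n a b.
Proof.
move=> /nstep_weight/andP[] + + a_ge0 b_ge0.
have : 0 <= Num.max (a / n) b by rewrite le_max b_ge0 orbT.
rewrite /nstep; move: (1 / (n + 1)) => t *; nra.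
Qed.

Lemma nstep0l (R : realFieldType) (n b : R) : 0 <= b -> nstep n 0 b = b.
Proof.
move=> b_ge0; rewrite /nstep mul0r (max_idPr b_ge0) add0r.
by rewrite -mulrDl subrK mul1r.
Qed.

Section PartialNorms.
Variables (R : realType) (Xs : nat -> normedModType R).
Implicit Types (x y w v : seqs Xs) (e : nat -> R).

Definition norm_determined (G : seqs Xs -> nat -> R) :=
  forall x y k, (forall i, (i <= k)%N -> `|x i| = `|y i|) -> G x k = G y k.

Lemma norm_sign_seq e x k : e k = 1 \/ e k = -1 -> `|sign_seq e x k| = `|x k|.
Proof. by rewrite /sign_seq normrZ => -[] ->; rewrite ?normrN normr1 mul1r. Qed.

Lemma sign_seq_invariant G e x k : norm_determined G ->
  (forall i, e i = 1 \/ e i = -1) -> G (sign_seq e x) k = G x k.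
Proof. by move=> G_det signs; apply: G_det => i _; exact: norm_sign_seq. Qed.

Lemma NrecS x k : Nrec x k.+1 = nstep k.+2%:R `|x k.+1| (Nrec x k).
Proof. by []. Qed.

Lemma Nrec_leS x k : Nrec x k <= Nrec x k.+1.
Proof. by rewrite NrecS nstep_ge_r ?ler1n. Qed.

Lemma Nrec_ge0 x k : 0 <= Nrec x k.
Proof. by elim: k => [|k IH]; [exact: normr_ge0 | exact: le_trans (Nrec_leS x k)]. Qed.

Lemma Nrec_determined : norm_determined (@Nrec R Xs).
Proof.
move=> x y; elim=> [|k IH] xy; first exact: xy.
by rewrite !NrecS xy // IH // => i ik; rewrite xy // leqW.
Qed.

Lemma NrecS0 x k : x k.+1 = 0 -> Nrec x k.+1 = Nrec x k.
Proof. by move=> x0; rewrite NrecS x0 normr0 nstep0l ?Nrec_ge0. Qed.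

Lemma Zrec0 x : Zrec x 0 = `|x 0%N|.
Proof. exact: big_ord1. Qed.

Lemma ZrecS x k : Zrec x k.+1 = Zrec x k + `|x k.+1|.
Proof. by rewrite /Zrec big_ord_recr. Qed.

Lemma Zrec_leS x k : Zrec x k <= Zrec x k.+1.
Proof. by rewrite ZrecS lerDl. Qed.

Lemma Zrec_ge0 x k : 0 <= Zrec x k.
Proof. by apply: sumr_ge0 => i _; exact: normr_ge0. Qed.

Lemma Zrec_determined : norm_determined (@Zrec R Xs).
Proof. by move=> x y k xy; apply: eq_bigr => i _; rewrite xy // -ltnS. Qed.

Lemma ZrecS0 x k : x k.+1 = 0 -> Zrec x k.+1 = Zrec x k.
Proof. by move=> x0; rewrite ZrecS x0 normr0 addr0. Qed.

Lemma Nrec_le_Zrec x k : Nrec x k <= Zrec x k.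
Proof.
elim: k => [|k IH]; first by rewrite Zrec0.
rewrite NrecS ZrecS addrC (le_trans (nstep_le_add _ _ _)) ?ler1n ?Nrec_ge0 //.
by rewrite lerD2l.
Qed.

Lemma norm_le_Nrec x k : `|x k| <= 2 * Nrec x k.
Proof.
case: k => [|k]; last by rewrite NrecS nstep_ge_l ?ler1n ?Nrec_ge0.
by rewrite /= ler_peMl // ler1n.
Qed.

Lemma norm_le_Zrec x k : `|x k| <= 2 * Zrec x k.
Proof.
rewrite (le_trans _ (ler_peMl _ _)) ?Zrec_ge0 ?ler1n //.
by case: k => [|k]; rewrite ?Zrec0 // ZrecS lerDr Zrec_ge0.
Qed.

Lemma partial_trunc G : norm_determined G ->
    (forall x k, x k.+1 = 0 -> G x k.+1 = G x k) ->
  forall x m k, (m <= k)%N -> G (trunc m x) k = G x m.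
Proof.
move=> G_det G_S0 x m k /subnK <-; elim: (k - m)%N => [|j IH].
  by apply: G_det => i im; rewrite /trunc im.
by rewrite addSn G_S0 // /trunc ltnNge leq_addl.
Qed.

Lemma Zrec_nondecreasing x : {homo Zrec x : i j / (i <= j)%N >-> i <= j}.
Proof. exact: homo_leq le_trans (Zrec_leS x). Qed.

Lemma Zrec_le_Znorm x k : summable x -> Zrec x k <= Znorm x.
Proof. by move=> sx; exact: nondecreasing_cvgn_le (Zrec_nondecreasing x) sx k. Qed.

Lemma Znorm_ge0 x : summable x -> 0 <= Znorm x.
Proof. by move=> sx; exact: le_trans (Zrec_ge0 x 0) (Zrec_le_Znorm 0 sx). Qed.

Lemma summable_bounded x : summable x <-> exists M, forall k, Zrec x k <= M.
Proof.
split=> [sx | [M leM]]; first by exists (Znorm x) => k; exact: Zrec_le_Znorm.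
by apply: (nondecreasing_is_cvgn (Zrec_nondecreasing x)); exists M => _ [k _ <-].
Qed.

Lemma summable_sub_trunc w v m :
  summable w -> summable (sub_seq w (trunc m v)).
Proof.
move=> /summable_bounded[M leM]; apply/summable_bounded.
exists (M + Zrec v m) => k.
have trunc_le : Zrec (trunc m v) k <= Zrec v m.
  rewrite -(partial_trunc Zrec_determined ZrecS0 v (leq_maxr k m)).
  exact: Zrec_nondecreasing (leq_maxl k m).
apply: le_trans (lerD (leM k) trunc_le).
by rewrite /Zrec -big_split /=; apply: ler_sum => i _; exact: ler_normB.
Qed.

Lemma sub_trunc w m i :
  sub_seq w (trunc m w) i = if (i <= m)%N then 0 else w i.
Proof. by rewrite /sub_seq /trunc; case: ifP; rewrite ?subrr ?subr0. Qed.

Lemma Zrec_tail w m k :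
  Zrec (sub_seq w (trunc m w)) k + Zrec w m = Zrec w (maxn k m).
Proof.
elim: k => [|k IH]; first by rewrite Zrec0 sub_trunc normr0 add0r max0n.
rewrite ZrecS sub_trunc; case: leqP => [mk | km].
  by rewrite addrAC IH (maxn_idPl mk) (maxn_idPl (leqW mk)) ZrecS.
by rewrite normr0 addr0 IH (maxn_idPr (ltnW km)) (maxn_idPr km).
Qed.

Lemma Znorm_tail_cvg w : summable w ->
  (fun m => Znorm (sub_seq w (trunc m w))) @ \oo --> 0.
Proof.
move=> sw; apply: (@squeeze_cvgr _ _ _ _ (fun=> 0) (fun m => Znorm w - Zrec w m)).
- exists 0%N => // m _; have tail_summable := summable_sub_trunc (v := w) (m := m) sw.
  rewrite /= Znorm_ge0 //=; apply: limr_le => //.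
  by exists 0%N => // k _; rewrite /= lerBrDr Zrec_tail Zrec_le_Znorm.
- exact: cvg_cst.
- by rewrite -(subrr (Znorm w)); apply: cvgB => //; exact: cvg_cst.
Qed.

End PartialNorms.

Section PartialNormDecomposition.
Variables (R : realType) (Xs : nat -> normedModType R) (F : seqs Xs -> nat -> R).
Hypothesis F_determined : norm_determined F.
Hypothesis F_leS : forall x k, F x k <= F x k.+1.
Hypothesis F_S0 : forall x k, x k.+1 = 0 -> F x k.+1 = F x k.
Hypothesis norm_le_F : forall x k, `|x k| <= 2 * F x k.
Hypothesis F_le_Zrec : forall x k, F x k <= Zrec x k.
Implicit Types (x w v : seqs Xs).

Let F_nondecreasing x : {homo F x : i j / (i <= j)%N >-> i <= j}.
Proof. exact: homo_leq le_trans (F_leS x). Qed.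

Let F_cvg x : summable x -> cvgn (F x).
Proof.
move=> sx; apply: nondecreasing_is_cvgn (F_nondecreasing x) _.
by exists (Znorm x) => _ [k _ <-]; rewrite (le_trans (F_le_Zrec x k)) ?Zrec_le_Znorm.
Qed.

Let F_le_limn x k : summable x -> F x k <= limn (F x).
Proof. by move=> sx; exact: nondecreasing_cvgn_le (F_nondecreasing x) (F_cvg sx) k. Qed.

Let limn_le_Znorm x : summable x -> limn (F x) <= Znorm x.
Proof.
move=> sx; apply: limr_le; first exact: F_cvg.
by exists 0%N => // k _; rewrite /= (le_trans (F_le_Zrec x k)) ?Zrec_le_Znorm.
Qed.

Let limn_trunc x m : limn (F (trunc m x)) = F x m.
Proof.
apply: cvg_lim => //; apply: cvg_near_cst.
by exists m => // k /= mk; exact: partial_trunc.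
Qed.

Let norm_le_limn x k : summable x -> `|x k| / 2 <= limn (F x).
Proof.
move=> sx; rewrite ler_pdivrMr // mulrC (le_trans (norm_le_F x k)) //.
by rewrite ler_pM2l ?F_le_limn.
Qed.

Let limn_ge0 x : summable x -> 0 <= limn (F x).
Proof. by move=> sx; apply: le_trans (norm_le_limn 0 sx); rewrite divr_ge0. Qed.

Let limn_schauder : schauder_decomposition (fun x => limn (F x)).
Proof.
move=> w sw; split.
  apply: (@squeeze_cvgr _ _ _ _ (fun=> 0) (fun m => Znorm (sub_seq w (trunc m w)))).
  - exists 0%N => // m _; have tail_summable := summable_sub_trunc (v := w) (m := m) sw.
    by rewrite /= limn_ge0 ?limn_le_Znorm.
  - exact: cvg_cst.
  - exact: Znorm_tail_cvg.
move=> v tail_cvg; apply: functional_extensionality_dep => j; apply/eqP.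
rewrite eq_sym -subr_eq0 -normr_le0 -(pmulr_lle0 _ (_ : 0 < 2^-1)) ?invr_gt0 //.
rewrite -(cvg_lim _ tail_cvg) //; apply: limr_ge; first by apply/cvg_ex; exists 0.
exists j => // m /= jm; have := norm_le_limn j (summable_sub_trunc (v := v) (m := m) sw).
by rewrite /sub_seq /trunc jm.
Qed.

Lemma partial_norm_decomposition :
  let nrm x := limn (F x) in
  [/\ schauder_decomposition nrm, monotone_decomposition nrm
    & unconditional1_decomposition nrm].
Proof.
split=> [|w _ m|w e sw signs]; first exact: limn_schauder.
  by rewrite !limn_trunc.
have sign_seq_eq G : norm_determined G -> G (sign_seq e w) = G w.
  by move=> G_det; apply: funext => k; exact: sign_seq_invariant.
by split; rewrite /summable sign_seq_eq //; exact: Zrec_determined.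
Qed.

End PartialNormDecomposition.

Theorem proposition1p4 (R : realType) (Xs : nat -> completeNormedModType R) :
  schauder_decomposition (@Xnorm R Xs) /\ monotone_decomposition (@Xnorm R Xs) /\
  unconditional1_decomposition (@Xnorm R Xs) /\
  schauder_decomposition (@Znorm R Xs) /\ monotone_decomposition (@Znorm R Xs) /\
  unconditional1_decomposition (@Znorm R Xs) /\
  (forall (x : seqs Xs) (e : nat -> R) (m : nat),
      (forall k, e k = 1 \/ e k = -1) ->
      Nrec (sign_seq e x) m = Nrec x m /\ Nrec x m <= Nrec x m.+1 /\
      Zrec (sign_seq e x) m = Zrec x m /\ Zrec x m <= Zrec x m.+1).
Proof.
have [XS XM XU] := partial_norm_decomposition (@Nrec_determined R Xs)
  (@Nrec_leS R Xs) (@NrecS0 R Xs) (@norm_le_Nrec R Xs) (@Nrec_le_Zrec R Xs).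
have [ZS ZM ZU] := partial_norm_decomposition (@Zrec_determined R Xs)
  (@Zrec_leS R Xs) (@ZrecS0 R Xs) (@norm_le_Zrec R Xs) (fun x k => lexx (Zrec x k)).
do 6 (split; first by []).
move=> x e m signs; rewrite Nrec_leS Zrec_leS.
by rewrite !sign_seq_invariant //; [exact: Zrec_determined | exact: Nrec_determined].
Qed.
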